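(* Let $n\ge 4$ and let $x,y\in PT_n$ be distinct pyramidal tours with codes $x^c,y^c\in\{0,1\}^{\{3,\dots,n-1\}}$. The vertices $x^v$ and $y^v$ of $\mathrm{PYR}(n)$ are not adjacent if and only if at least one of the following two conditions holds: (1) there exists $k$ with $3<k<n-2$ such that $x^c_k=y^c_k\neq x^c_{k+1}=y^c_{k+1}$, and there exist $i$ with $3\le i<k$ and $j$ with $k+1<j\le n-1$ such that $x^c_i\ne y^c_i$ and $x^c_j\neq y^c_j$; (2) there exists $k$ with $3\le k<n-2$ such that $x^c_k=y^c_{k+1}\neq x^c_{k+1}=y^c_k$, and there exists $j$ with $k+1<j\le n-1$ such that $x^c_j=y^c_j$.
   Context: Let $K_n$ be the complete undirected graph on vertex set $\{1,\dots,n\}$ with edge set $E$. A Hamiltonian cycle $\langle 1,i_1,\dots,i_r,n,j_1,\dots,j_{n-r-2}\rangle$ is called a pyramidal tour if $i_1<i_2<\dots<i_r$ and $j_1>j_2>\dots>j_{n-r-2}$ (the tour leaves city $1$, visits some cities in increasing order, reaches city $n$, and returns to $1$ visiting the remaining cities in decreasing order); tours are undirected. Let $PT_n$ be the set of all pyramidal tours. For $x\in PT_n$ its characteristic vector $x^v\in\mathbb{R}^E$ has $x^v_e=1$ if edge $e$ lies in $x$ and $0$ otherwise. The pyramidal tours polytope is $\mathrm{PYR}(n)=\operatorname{conv}\{x^v : x\in PT_n\}$. Every pyramidal tour contains the edge $\{1,2\}$; the tour is oriented so that vertex $2$ belongs to the increasing part. The code of $x$ is the $0/1$ vector $x^c=(x^c_3,\dots,x^c_{n-1})$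 with $x^c_i=1$ if vertex $i$ is visited in the increasing part of $x$ (between $1$ and $n$ when travelling $1\to 2\to\cdots$) and $x^c_i=0$ otherwise. The map $x\mapsto x^c$ is a bijection from $PT_n$ onto $\{0,1\}^{n-3}$. *)

(* Cities are the natural numbers 1..n. *)
From HB Require Import structures.
From mathcomp Require Import all_boot all_order all_algebra.
Set Implicit Arguments. Unset Strict Implicit. Unset Printing Implicit Defensive.
Import Order.TTheory GRing.Theory Num.Theory.

(* A Hamiltonian cycle of K_n is written as a sequence s listing every city
   exactly once, the cycle closing from the last element back to the first. *)
Definition pyramidal (n : nat) (s : seq nat) : Prop :=
  perm_eq s (iota 1 n) /\
  exists l1 l2 : seq nat,
    s = 1 :: l1 ++ n :: l2 /\ sorted ltn l1 /\ sorted gtn l2.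

(* The edge set E of K_n: unordered pairs {i,j}, encoded as (i,j) with 1 <= i < j <= n. *)
Definition Epairs (n : nat) : seq (nat * nat) :=
  [seq p <- [seq (i, j) | i <- iota 1 n, j <- iota 1 n] | p.1 < p.2].

Definition tour_edges (s : seq nat) : seq (nat * nat) :=
  [seq (minn p.1 p.2, maxn p.1 p.2) | p <- zip s (rot 1 s)].

Definition charvec (R : numDomainType) (s : seq nat) (e : nat * nat) : R :=
  ((e \in tour_edges s) : nat)%:R.

Definition dot (R : numDomainType) (n : nat) (c : nat * nat -> R) (s : seq nat) : R :=
  (\sum_(e <- Epairs n) c e * charvec R s e)%R.

(* Two cycles are the same (undirected) tour iff they have the same characteristic vector. *)
Definition same_tour (n : nat) (s t : seq nat) : Prop :=
  forall e, e \in Epairs n -> (e \in tour_edges s) = (e \in tour_edges t).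

(* Adjacency of the vertices x^v, y^v of PYR(n) = conv{ z^v : z in PT_n }:
   conv{x^v, y^v} is a face, i.e. some linear functional c attains its maximum
   over PYR(n) exactly at x^v and y^v (among the vertices z^v). *)
Definition pyr_adjacent (R : realFieldType) (n : nat) (x y : seq nat) : Prop :=
  exists c : nat * nat -> R,
    dot n c x = dot n c y /\
    forall z, pyramidal n z -> ~ same_tour n z x -> ~ same_tour n z y ->
      (dot n c z < dot n c x)%R.

(* Increasing part (the cities strictly between 1 and n when reading s). *)
Definition inc_part (n : nat) (s : seq nat) : seq nat :=
  take (index n (behead s)) (behead s).

(* The code x^c: for a city i, true iff i lies on the same side of the cycle
   as city 2 (i.e. in the increasing part once the tour is oriented so that
   2 belongs to the increasing part). *)
Definition code (n : nat) (s : seq nat) (i : nat) : bool :=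
  (i \in inc_part n s) == (2 \in inc_part n s).

From HB Require Import structures.
From mathcomp Require Import all_boot all_order all_algebra.
From mathcomp Require Import zify lra.
From Stdlib Require Import Classical_Prop.
Set Implicit Arguments. Unset Strict Implicit. Unset Printing Implicit Defensive.
Import Order.TTheory GRing.Theory Num.Theory.

(* A pyramidal tour is determined by its code, extended by 0 at city 1: besides
   {1, 2}, its edges are the pairs {p, q} where q is the first city after p with the
   same code bit, or n if there is none.

   Suppose the codes f and g of x and y both switch at some k, differ somewhere up to
   k, and f + g (mod 2) is not constant after k.  Exchanging the parts of x and y
   beyond k then yields two other pyramidal tours z and w with z^v + w^v = x^v + y^v,
   so x^v and y^v are not adjacent.  Otherwise, let z be a tour all of whose edges lie
   in x or y, so that the larger neighbour of each city in z is its larger neighbour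
   in x or in y; comparing z with x and y at their first disagreements produces such
   a k unless z is x or y.  Then the functional x^v + y^v - 1 is maximised over
   PYR(n) exactly at x^v and y^v, which are therefore adjacent.  The two conditions of
   the theorem are this splice condition written out in terms of the codes. *)

(* [zify] case-splits on every boolean hypothesis, which makes [lia] blow up
   here; keep only the arithmetic facts before calling it. *)
Ltac lia_nat := repeat match goal with
  | H : ?T |- _ => lazymatch T with
       | is_true (leq _ _) => fail
       | is_true (andb (leq _ _) (leq _ _)) => fail
       | is_true (~~ (leq _ _)) => fail
       | @eq nat _ _ => fail
       | _ => clear H
     end
  end; lia.

Section NextSame.
Variables (f : nat -> bool) (n : nat).

Definition next_same (i : nat) : nat :=
  i.+1 + find (fun j => f j == f i) (iota i.+1 (n - i.+1)).

Lemma next_same_gt i : i < next_same i.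
Proof. by rewrite /next_same; lia_nat. Qed.

Lemma next_same_le i : i < n -> next_same i <= n.
Proof.
move=> lt_in; rewrite /next_same.
have := find_size (fun j => f j == f i) (iota i.+1 (n - i.+1)).
rewrite size_iota; lia_nat.
Qed.

Lemma next_same_before i j : i < j < next_same i -> f j != f i.
Proof.
rewrite /next_same; set s := iota _ _ => /andP[lt_ij lt_j].
have lt_find : j - i.+1 < find (fun j => f j == f i) s by lia_nat.
have lt_size : j - i.+1 < size s by have := find_size (fun j => f j == f i) s; lia_nat.
rewrite /s size_iota in lt_size.
by have := before_find 0 lt_find; rewrite nth_iota // subnKC // => /negbT.
Qed.

Lemma next_same_at i : next_same i < n -> f (next_same i) = f i.
Proof.
rewrite /next_same; set s := iota _ _ => lt_n.
have has_same : has (fun j => f j == f i) s by rewrite has_find size_iota; lia_nat.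
by have /eqP := nth_find 0 has_same; rewrite nth_iota //; lia_nat.
Qed.

Lemma next_same_ge i m : m <= n -> (forall j, i < j < m -> f j != f i) -> m <= next_same i.
Proof.
move=> le_mn before_m; rewrite leqNgt; apply/negP => lt_next.
have := before_m (next_same i); rewrite next_same_gt lt_next next_same_at ?eqxx //.
  by move/(_ isT).
lia_nat.
Qed.

Lemma next_sameP i m : i < m <= n ->
  (forall j, i < j < m -> f j != f i) -> (m < n -> f m = f i) -> next_same i = m.
Proof.
move=> /andP[lt_im le_mn] before_m at_m; apply/eqP; rewrite eqn_leq next_same_ge // andbT.
rewrite leqNgt; apply/negP => lt_m.
have lt_mn : m < n by have := next_same_le (leq_trans lt_im le_mn); lia_nat.
by have := @next_same_before i m; rewrite lt_im lt_m at_m // eqxx => /(_ isT).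
Qed.

Lemma next_same_eqE i m : m < n -> i < m <= next_same i ->
  (next_same i == m) = (f m == f i).
Proof.
move=> lt_mn /andP[lt_im le_next]; case: eqVneq => [e|ne_next].
  by rewrite -e next_same_at ?eqxx // e.
by apply/esym/negbTE/next_same_before; rewrite lt_im ltn_neqAle eq_sym ne_next.
Qed.

Lemma eq_next_sameE i m : i < m <= n ->
  (m == next_same i) =
  ((m < n) ==> (f m == f i)) && all (fun j => f j != f i) (iota i.+1 (m - i.+1)).
Proof.
move=> /andP[lt_im le_mn]; apply/eqP/andP => [-> | [at_m /allP before_m]].
  split; first by apply/implyP => /next_same_at ->.
  by apply/allP => j; rewrite mem_iota => rng_j; apply: next_same_before; lia_nat.
apply/esym/next_sameP; first by rewrite lt_im.
  by move=> j rng_j; apply: before_m; rewrite mem_iota; lia_nat.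
by move=> lt_mn; apply/eqP; apply: (implyP at_m).
Qed.

Lemma next_same_succ i : i.+1 < n -> (next_same i == i.+1) = (f i.+1 == f i).
Proof. by move=> lt_n; rewrite next_same_eqE // ltnSn next_same_gt. Qed.

End NextSame.

Lemma eq_next_same f g n i : i < n ->
  (forall j, i <= j <= next_same f n i -> j < n -> (g j == g i) = (f j == f i)) ->
  next_same g n i = next_same f n i.
Proof.
move=> lt_in same_pattern; have le_next := next_same_le f lt_in.
have lt_next := next_same_gt f n i.
apply: next_sameP; first by rewrite lt_next.
- move=> j /andP[lt_ij lt_j]; rewrite same_pattern; try lia_nat.
  by apply: (@next_same_before f n); rewrite lt_ij.
- move=> lt_n; apply/eqP.
  by rewrite same_pattern ?leqnn ?lt_n ?(ltnW lt_next) // next_same_at ?eqxx.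
Qed.

Lemma next_same_addb f g n i d : i < n ->
  (forall j, i <= j < n -> g j = f j (+) d) -> next_same g n i = next_same f n i.
Proof.
move=> lt_in gfd; apply: eq_next_same => // j rng lt_jn.
by rewrite !gfd ?(inj_eq (addIb d)) //; lia_nat.
Qed.

Lemma next_same_diverge f g n i m : i < m < n ->
  (forall j, i <= j < m -> g j = f j) -> (forall j, i < j < m -> f j != f i) -> g m != f m ->
  next_same g n i != next_same f n i.
Proof.
move=> /andP[lt_im lt_mn] eq_gf before_m ne_m.
have g_before j : i < j < m -> g j != g i.
  by move=> rng_j; rewrite !eq_gf ?before_m //; lia_nat.
have rng_m : i < m <= next_same f n i by rewrite lt_im next_same_ge // ltnW.
have rng_m' : i < m <= next_same g n i by rewrite lt_im next_same_ge // ltnW.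
apply: contra ne_m => /eqP next_gf.
have : (g m == g i) = (f m == f i).
  by rewrite -(next_same_eqE lt_mn rng_m) -(next_same_eqE lt_mn rng_m') next_gf.
by rewrite (eq_gf i) ?leqnn //; case: (g m); case: (f m); case: (f i).
Qed.

Lemma addb_change_of_next_same f g n k : k < n -> f k (+) g k = f k.+1 (+) g k.+1 ->
  next_same f n k != next_same g n k ->
  exists2 j, k < j < n & f j (+) g j != f k.+1 (+) g k.+1.
Proof.
move=> lt_kn const_k ne_next; set d := f k.+1 (+) g k.+1.
have [/hasP[j] | /hasPn const_after] :=
  boolP (has (fun j => f j (+) g j != d) (iota k.+1 (n - k.+1))).
  by rewrite mem_iota => rng_j ne_j; exists j => //; lia_nat.
case/negP: ne_next; apply/eqP/esym/(next_same_addb (d := d)) => // j rng_j.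
have /eqP <- : f j (+) g j == d.
  have [lt_kj | ->] : k < j \/ j = k by lia_nat.
    by rewrite -[_ == _]negbK; apply: const_after; rewrite mem_iota; lia_nat.
  by rewrite const_k.
by case: (f j); case: (g j).
Qed.

(* [f] up to [k], then [g] shifted by a constant so that it continues [f] across [k]. *)
Definition splice (f g : nat -> bool) (k j : nat) : bool :=
  if j <= k then f j else g j (+) (f k (+) g k).

Section Splice.
Variables (f g : nat -> bool) (k : nat).
Hypotheses (switch_f : f k != f k.+1) (switch_g : g k != g k.+1).

Lemma splice_left j : j <= k.+1 -> splice f g k j = f j.
Proof.
rewrite /splice leq_eqVlt ltnS => /orP[/eqP->|->] //; rewrite ltnn.
by move: switch_f switch_g; case: (f k); case: (f k.+1); case: (g k); case: (g k.+1).
Qed.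

Lemma splice_right j : k <= j -> splice f g k j = g j (+) (f k (+) g k).
Proof.
rewrite /splice leq_eqVlt => /orP[/eqP<-|/ltn_geF->] //.
by rewrite leqnn; case: (f k); case: (g k).
Qed.

Lemma next_same_splice n i : k.+1 < n -> i < n ->
  next_same (splice f g k) n i = if i < k then next_same f n i else next_same g n i.
Proof.
move=> lt_kn lt_in; case: ltnP => [lt_ik | le_ki]; apply: eq_next_same => // j.
- have le_next : next_same f n i <= k.+1.
    rewrite leqNgt; apply/negP => lt_next.
    have ne_k : f k != f i by apply: (@next_same_before f n); lia_nat.
    have ne_k1 : f k.+1 != f i by apply: (@next_same_before f n); lia_nat.
    by move: switch_f ne_k ne_k1; case: (f k); case: (f k.+1); case: (f i).
  by move=> rng _; rewrite !splice_left //; lia_nat.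
- by move=> rng _; rewrite !splice_right ?(inj_eq (addIb _)) //; lia_nat.
Qed.

End Splice.

Definition nontrivial_splice (n : nat) (f g : nat -> bool) : Prop :=
  exists k, [/\ 0 < k, k.+1 < n, f k != f k.+1 & g k != g k.+1] /\
    (exists2 i, 0 < i <= k & f i != g i) /\
    (exists2 j, k < j < n & f j (+) g j != f k.+1 (+) g k.+1).

Lemma nontrivial_splice_sym n f g : nontrivial_splice n f g -> nontrivial_splice n g f.
Proof.
case=> k [[k_gt0 lt_kn sw_f sw_g] [[i rng_i ne_i] [j rng_j ne_j]]].
exists k; split=> //; split; first by exists i; rewrite // eq_sym.
by exists j; rewrite // addbC [g k.+1 (+) _]addbC.
Qed.

Section Mixture.
Variables (n : nat) (f g h : nat -> bool).
Hypothesis next_h : forall i, 0 < i -> i.+1 < n ->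
  next_same h n i = next_same f n i \/ next_same h n i = next_same g n i.

Lemma last_switch_before b : g 1 != g 2 -> 2 < b ->
  exists2 k, 0 < k < b.-1 & g k != g k.+1 /\ forall j, k < j < b -> g j != g k.
Proof.
move=> sw_g12 gt2_b; pose P k := (k < b.-1) && (g k != g k.+1).
have exP : exists k, P k by exists 1; rewrite /P sw_g12 andbT; lia_nat.
have ubP k : P k -> k <= b by case/andP; lia_nat.
have [k /andP[lt_kb sw_g] max_k] := ex_maxnP exP ubP.
have k_gt0 : 0 < k by apply: max_k; rewrite /P sw_g12 andbT; lia_nat.
have g_after j : k < j < b -> g j = g k.+1.
  elim: j => [|j IHj] rng_j; first lia_nat.
  have [lt_kj | -> //] : k < j \/ j = k by lia_nat.
  have /negP : ~ P j by move/max_k; lia_nat.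
  rewrite /P (_ : j < b.-1) /=; last lia_nat.
  by rewrite negbK => /eqP <-; apply: IHj; lia_nat.
exists k; first by rewrite k_gt0.
by split=> // j rng_j; rewrite g_after // eq_sym.
Qed.

(* [a] and [b] are the first cities where [h] leaves [f] and [g] respectively;
   at the last switch [k] of [g] before [b], [h] must follow [f]. *)
Lemma nontrivial_splice_of_first_differences a b :
  g 1 != g 2 -> 2 < b -> b < n -> a < b ->
  0 < a -> h a != f a -> (forall i, 0 < i < a -> h i = f i) ->
  h b != g b -> (forall i, 0 < i < b -> h i = g i) ->
  nontrivial_splice n f g.
Proof.
move=> sw_g12 gt2_b lt_bn lt_ab a_gt0 hf_a hf_before hg_b hg_before.
have [k /andP[k_gt0 lt_kb] [sw_g g_ne]] := last_switch_before sw_g12 gt2_b.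
have hg_k : h k = g k by apply: hg_before; lia_nat.
have ne_hg : next_same h n k != next_same g n k.
  apply: (next_same_diverge (m := b)) => //; first lia_nat.
  by move=> j rng_j; apply: hg_before; lia_nat.
have ge_h : b <= next_same h n k.
  by apply: next_same_ge (ltnW lt_bn) _ => j rng_j; rewrite hg_k hg_before ?g_ne //; lia_nat.
have next_hf : next_same h n k = next_same f n k.
  have lt_k1n : k.+1 < n by lia_nat.
  by case: (next_h k_gt0 lt_k1n) => // next_hg; rewrite next_hg eqxx in ne_hg.
have le_ak : a <= k.
  rewrite leqNgt; apply/negP => lt_ka.
  have hf_k : h k = f k by apply: hf_before; lia_nat.
  have ne_f : f a != f k by apply: (@next_same_before f n); rewrite -next_hf; lia_nat.
  have ne_h : h a != h k by apply: (@next_same_before h n); lia_nat.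
  by move: hf_a ne_f ne_h; rewrite hf_k; case: (h a); case: (f a); case: (f k).
have sw_f : f k != f k.+1.
  by rewrite eq_sym; apply: (@next_same_before f n); rewrite -next_hf; lia_nat.
exists k; split; first by split=> //; lia_nat.
have hg_a : h a = g a by apply: hg_before; lia_nat.
split; first by exists a; [lia_nat | rewrite -hg_a eq_sym].
apply: addb_change_of_next_same; first lia_nat.
  by move: sw_f sw_g; case: (f k); case: (f k.+1); case: (g k); case: (g k.+1).
by rewrite -next_hf.
Qed.

End Mixture.

Lemma gt2_of_diff (f g : nat -> bool) i :
  f 1 = g 1 -> f 2 = g 2 -> 0 < i -> f i != g i -> 2 < i.
Proof.
move=> fg1 fg2 i_gt0 ne_i; rewrite ltnNge; apply/negP => le_i2.
have [i1 | i2] : i = 1 \/ i = 2 by lia_nat.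
  by rewrite i1 fg1 eqxx in ne_i.
by rewrite i2 fg2 eqxx in ne_i.
Qed.

Lemma nontrivial_splice_of_mixture n f g h :
  (forall i, 0 < i -> i.+1 < n ->
     next_same h n i = next_same f n i \/ next_same h n i = next_same g n i) ->
  f 1 = false -> f 2 = true -> g 1 = false -> g 2 = true -> h 1 = false -> h 2 = true ->
  (exists2 i, 0 < i < n & h i != f i) -> (exists2 i, 0 < i < n & h i != g i) ->
  nontrivial_splice n f g.
Proof.
move=> next_h f1 f2 g1 g2 h1 h2 diff_f diff_g.
have first_diff (e : nat -> bool) : e 1 = false -> e 2 = true ->
    (exists2 i, 0 < i < n & h i != e i) ->
    exists a, [/\ 2 < a < n, h a != e a & forall i, 0 < i < a -> h i = e i].
  move=> e1 e2 [i rng_i ne_i].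
  have ex_a : exists a, (0 < a < n) && (h a != e a) by exists i; rewrite rng_i.
  have [a /andP[rng_a ne_a] min_a] := ex_minnP ex_a.
  have before_a j : 0 < j < a -> h j = e j.
    move=> rng_j; apply/eqP; apply: contraTT rng_j => ne_j.
    have := min_a j; rewrite ne_j andbT; lia_nat.
  have gt2_a : 2 < a by apply: (gt2_of_diff (f := h) (g := e)); rewrite ?h1 ?h2 ?e1 ?e2 //; lia_nat.
  by exists a; split; rewrite ?gt2_a //; lia_nat.
have [a [/andP[gt2_a lt_an] ne_a before_a]] := first_diff f f1 f2 diff_f.
have [b [/andP[gt2_b lt_bn] ne_b before_b]] := first_diff g g1 g2 diff_g.
case: (ltngtP a b) => [lt_ab | lt_ba | eq_ab].
- apply: (nontrivial_splice_of_first_differences next_h (a := a) (b := b));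
    rewrite ?g1 ?g2 //; lia_nat.
- apply: nontrivial_splice_sym.
  apply: (@nontrivial_splice_of_first_differences n g f h _ b a); rewrite ?f1 ?f2 //; try lia_nat.
  by move=> i i_gt0 lt_in; rewrite or_comm; apply: next_h.
- subst b; have [i def_a] : exists i, a = i.+1 by exists a.-1; lia_nat.
  subst a; have i_gt0 : 0 < i by lia_nat.
  have succ_h := @next_same_succ h n i lt_an.
  case: (next_h i i_gt0 lt_an) => next_hi; rewrite next_hi next_same_succ // in succ_h.
    move: ne_a succ_h; rewrite (before_a i); last lia_nat.
    by case: (h i.+1); case: (f i.+1); case: (f i).
  move: ne_b succ_h; rewrite (before_b i); last lia_nat.
  by case: (h i.+1); case: (g i.+1); case: (g i).
Qed.

Definition consecutive (P : pred nat) (p q : nat) : bool :=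
  [&& P p, P q & ~~ has P (iota p.+1 (q - p.+1))].

Lemma eq_consecutive (P Q : pred nat) p q : p < q ->
  (forall w, p <= w <= q -> P w = Q w) -> consecutive P p q = consecutive Q p q.
Proof.
move=> lt_pq eqPQ; rewrite /consecutive !eqPQ ?leqnn ?(ltnW lt_pq) //.
congr [&& _, _ & ~~ _]; apply: eq_in_has => w; rewrite mem_iota => rng_w.
by apply: eqPQ; lia_nat.
Qed.

(* One of the two monotone paths of the tour with extended code [b]: the cities whose
   bit is [c], together with the end points 1 and [n]. *)
Definition side (b : nat -> bool) (n : nat) (c : bool) (w : nat) : bool :=
  [|| w == 1, w == n | b w == c].

Section Sides.
Variables (b : nat -> bool) (n : nat).
Hypotheses (b1 : b 1 = false) (b2 : b 2 = true).

Lemma consecutive_side c p q : 0 < p < q -> q <= n -> b p = c ->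
  consecutive (side b n c) p q = (q == next_same b n p).
Proof.
move=> /andP[p_gt0 lt_pq] le_qn bp; rewrite eq_next_sameE ?lt_pq // /consecutive.
have -> : side b n c p by rewrite /side bp eqxx !orbT.
have -> : side b n c q = (q < n) ==> (b q == b p).
  have ne_q1 : q != 1 by lia_nat.
  rewrite /side bp (negbTE ne_q1) /= ltn_neqAle le_qn andbT.
  by case: (q == n).
rewrite -all_predC (@eq_in_all _ _ (fun j => b j != b p)) // => w.
rewrite mem_iota => rng_w.
have [ne_w1 ne_wn] : w != 1 /\ w != n by split; lia_nat.
by rewrite /side /= bp (negbTE ne_w1) (negbTE ne_wn).
Qed.

Lemma consecutive_side_other p q : 1 < p < n -> consecutive (side b n (~~ b p)) p q = false.
Proof.
move=> rng_p; have [ne_p1 ne_pn] : p != 1 /\ p != n by split; lia_nat.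
by rewrite /consecutive /side (negbTE ne_p1) (negbTE ne_pn); case: (b p).
Qed.

Lemma consecutive_side1 q : 1 < q <= n -> consecutive (side b n true) 1 q = (q == 2).
Proof.
move=> rng_q; case: (eqVneq q 2) => [-> | ne_q2] /=.
  by rewrite /consecutive /side /= b2 orbT.
have gt2_q : 2 < q by rewrite ltn_neqAle eq_sym ne_q2; lia_nat.
apply/negbTE/negP => /and3P[_ _]; apply/negP/negPn/hasP; exists 2.
  by rewrite mem_iota; lia_nat.
by rewrite /side b2 eqxx !orbT.
Qed.

Lemma consecutive_sides p q : 0 < p < q -> q <= n ->
  consecutive (side b n true) p q || consecutive (side b n false) p q =
  ((p == 1) && (q == 2)) || (q == next_same b n p).
Proof.
move=> rng_pq le_qn; case: (eqVneq p 1) => [p1 | ne_p1].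
  by rewrite p1 consecutive_side1 ?consecutive_side //; lia_nat.
have rng_p : 1 < p < n by move: ne_p1; lia_nat.
have := consecutive_side_other q rng_p; rewrite /=.
by case bp: (b p) => /= ->; rewrite ?orbF consecutive_side.
Qed.

End Sides.

Lemma mem_pairmap_path (T : eqType) (r : rel T) x s u v :
  irreflexive r -> transitive r -> path r x s ->
  ((u, v) \in pairmap pair x s) =
  [&& u \in x :: s, v \in x :: s, r u v & ~~ has (fun w => r u w && r w v) (x :: s)].
Proof.
move=> irr tr; elim: s x => [|y s IH] x.
  move=> _ /=; rewrite in_nil !mem_seq1; symmetry.
  by case: eqP => [->|] //=; case: eqP => [->|] //=; rewrite irr.
move=> /andP[rxy path_ys].
have -> : pairmap pair x (y :: s) = (x, y) :: pairmap pair y s by [].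
rewrite [(u, v) \in _]in_cons IH //.
have ry : all (r y) s := order_path_min tr path_ys.
have rx : all (r x) (y :: s) by apply: order_path_min => //=; rewrite rxy.
have below_x w : w \in y :: s -> r w x = false.
  by move=> ws; apply/negP => rwx; have := tr _ _ _ rwx (allP rx w ws); rewrite irr.
apply/idP/idP.
- case/orP => [/eqP [-> ->] | /and4P [us vs ruv no_mid]].
    rewrite !in_cons !eqxx !orTb !orbT rxy !andTb; apply/hasPn => w.
    rewrite !in_cons => /or3P[/eqP-> | /eqP-> | ws]; rewrite ?irr ?andbF //.
    by apply/negP => /andP[_ rwy]; have := tr _ _ _ (allP ry w ws) rwy; rewrite irr.
  rewrite in_cons us orbT in_cons vs orbT ruv /=.
  by rewrite below_x // negb_or no_mid.
- case/and4P => us vs ruv no_mid.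
  have [eux | nux] := eqVneq u x.
    subst u; apply/orP; left; move: vs; rewrite !in_cons.
    case/or3P => [/eqP evx | /eqP -> // | vs]; first by rewrite evx irr in ruv.
    case/negP: no_mid; apply/hasP; exists y; first by rewrite !in_cons eqxx orbT.
    by rewrite rxy (allP ry v vs).
  move: us; rewrite in_cons (negbTE nux) /= => us.
  have vs' : v \in y :: s.
    by move: vs; rewrite in_cons => /orP[/eqP evx | //]; rewrite evx below_x in ruv.
  apply/orP; right; rewrite us vs' ruv /=.
  by move: no_mid; rewrite -(cat1s x (y :: s)) has_cat negb_or => /andP[_ ->].
Qed.

Lemma zip_rot1 (T : Type) (x : T) r : zip (x :: r) (rot 1 (x :: r)) = pairmap pair x (rcons r x).
Proof.
rewrite rot1_cons; elim: r {1 3}x => //= y r IH z.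
by rewrite IH.
Qed.

Lemma mem_tour_edges s p q : p < q ->
  ((p, q) \in tour_edges s) = ((p, q) \in zip s (rot 1 s)) || ((q, p) \in zip s (rot 1 s)).
Proof.
move=> lt_pq; apply/mapP/orP => [[[u v] uv /= [-> ->]] | ].
  by case: leqP => _; [left | right].
case=> [pq | qp]; [exists (p, q) | exists (q, p)] => //=.
  by rewrite (minn_idPl (ltnW lt_pq)) (maxn_idPr (ltnW lt_pq)).
by rewrite (minn_idPr (ltnW lt_pq)) (maxn_idPl (ltnW lt_pq)).
Qed.

Lemma has_between (L : seq nat) p q :
  has (fun w => p < w < q) L = has (mem L) (iota p.+1 (q - p.+1)).
Proof.
apply/hasP/hasP => [[w wL rng_w] | [w w_iota wL]]; exists w => //.
  by rewrite mem_iota; lia_nat.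
by move: w_iota; rewrite mem_iota; lia_nat.
Qed.

(* [code] is [true] at city 2 by its normalisation; we add [false] at city 1. *)
Definition ext_code (n : nat) (s : seq nat) (i : nat) : bool :=
  if i == 1 then false else code n s i.

Lemma ext_codeE n s i : 1 < i -> ext_code n s i = code n s i.
Proof. by rewrite /ext_code; case: eqP => [->|]. Qed.

Lemma ext_code1 n s : ext_code n s 1 = false.
Proof. by []. Qed.

Lemma ext_code2 n s : ext_code n s 2 = true.
Proof. by rewrite /ext_code /code eqxx. Qed.

Section PyramidalParts.
Variables (n : nat) (l1 l2 : seq nat).
Hypothesis perm_s : perm_eq (1 :: l1 ++ n :: l2) (iota 1 n).

Lemma count_parts w :
  (w == 1) + (w == n) + count_mem w l1 + count_mem w l2 = (0 < w <= n).
Proof.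
have := permP perm_s (pred1 w); rewrite /= count_cat /= (count_uniq_mem _ (iota_uniq 1 n)).
by rewrite mem_iota ![_ == w]eq_sym; lia.
Qed.

Lemma mem_parts_inner w : (w \in l1) || (w \in l2) -> 1 < w < n.
Proof.
rewrite -!has_pred1 !has_count; have := count_parts w.
by case: eqVneq => [->|]; case: eqVneq => [->|]; lia.
Qed.

Lemma mem_parts_complement w : 1 < w < n -> (w \in l2) = (w \notin l1).
Proof.
move=> rng_w; have [ne_w1 ne_wn] : w != 1 /\ w != n by split; lia_nat.
have in_w : 0 < w <= n by lia_nat.
rewrite -!has_pred1 !has_count; have := count_parts w.
by rewrite (negbTE ne_w1) (negbTE ne_wn) in_w; lia.
Qed.

Hypotheses (gt1_n : 1 < n) (sorted_l1 : sorted ltn l1) (sorted_l2 : sorted gtn l2).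

Let s := 1 :: l1 ++ n :: l2.
Let A := 1 :: rcons l1 n.
Let B := n :: rcons l2 1.

Lemma path_ascending : path ltn 1 (rcons l1 n).
Proof.
rewrite rcons_path (path_sortedE ltn_trans) sorted_l1 andbT; apply/andP; split.
  by apply/allP => w w_l1; have := @mem_parts_inner w; rewrite w_l1; lia_nat.
have := mem_last 1 l1; rewrite in_cons => /orP[/eqP-> // | last_l1].
by have := @mem_parts_inner (last 1 l1); rewrite last_l1; lia_nat.
Qed.

Lemma path_descending : path gtn n (rcons l2 1).
Proof.
rewrite rcons_path (path_sortedE (rev_trans ltn_trans)) sorted_l2 andbT; apply/andP; split.
  by apply/allP => w w_l2; have := @mem_parts_inner w; rewrite w_l2 orbT; lia_nat.
have := mem_last n l2; rewrite in_cons => /orP[/eqP-> // | last_l2].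
by have := @mem_parts_inner (last n l2); rewrite last_l2 orbT; lia_nat.
Qed.

Lemma tour_edges_parts p q : p < q ->
  ((p, q) \in tour_edges s) = consecutive (mem A) p q || consecutive (mem B) p q.
Proof.
move=> lt_pq; rewrite mem_tour_edges // zip_rot1 rcons_cat -cat_rcons pairmap_cat last_rcons.
rewrite !mem_cat (mem_pairmap_path _ _ ltnn ltn_trans path_ascending).
rewrite (mem_pairmap_path _ _ ltnn ltn_trans path_ascending).
rewrite !(mem_pairmap_path _ _ ltnn (rev_trans ltn_trans) path_descending).
have ltn_qp : (q < p) = false by rewrite ltnNge ltnW.
rewrite ltn_qp !andbF orbF orFb /consecutive -!has_between lt_pq !andTb [X in _ || X]andbCA.
by rewrite (@eq_has _ (fun w => (w < q) && (p < w)) (fun w => p < w < q)) // => w; rewrite andbC.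
Qed.

Lemma ext_code_parts w : 1 < w < n -> ext_code n s w = ((w \in l1) == (2 \in l1)).
Proof.
move=> rng_w; have nl1 : n \notin l1.
  by apply/negP => n_l1; have := @mem_parts_inner n; rewrite n_l1; lia_nat.
have inc_s : inc_part n s = l1.
  by rewrite /inc_part /= index_cat (negbTE nl1) /= eqxx addn0 take_size_cat.
by rewrite /ext_code /code inc_s (_ : w == 1 = false) //; lia_nat.
Qed.

Lemma mem_ascending w : 0 < w <= n -> (w \in A) = side (ext_code n s) n (2 \in l1) w.
Proof.
move=> rng_w; rewrite /A /side in_cons mem_rcons in_cons.
case: eqVneq => [// | ne_w1]; case: eqVneq => [// | ne_wn] /=.
by rewrite ext_code_parts; [case: (w \in l1); case: (2 \in l1) | move: ne_w1 ne_wn; lia_nat].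
Qed.

Lemma mem_descending w : 0 < w <= n -> (w \in B) = side (ext_code n s) n (2 \notin l1) w.
Proof.
move=> rng_w; rewrite /B /side in_cons mem_rcons in_cons orbA [(w == n) || _]orbC.
case: eqVneq => [// | ne_w1]; case: eqVneq => [// | ne_wn] /=.
have inner_w : 1 < w < n by move: ne_w1 ne_wn; lia_nat.
rewrite ext_code_parts // mem_parts_complement //.
by case: (w \in l1); case: (2 \in l1).
Qed.

End PyramidalParts.

Lemma pyramidal_edgeE n s p q : 2 < n -> pyramidal n s -> 0 < p < q -> q <= n ->
  ((p, q) \in tour_edges s) = ((p == 1) && (q == 2)) || (q == next_same (ext_code n s) n p).
Proof.
move=> gt2_n [perm_s [l1 [l2 [def_s [sorted_l1 sorted_l2]]]]] rng_pq le_qn; subst s.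
have gt1_n : 1 < n by lia_nat.
have eq_cons c (P : pred nat) :
    (forall w, 0 < w <= n -> P w = side (ext_code n (1 :: l1 ++ n :: l2)) n c w) ->
    consecutive P p q = consecutive (side (ext_code n (1 :: l1 ++ n :: l2)) n c) p q.
  by move=> eq_side; apply: eq_consecutive => [| w rng_w]; rewrite ?eq_side; lia_nat.
rewrite tour_edges_parts //; last lia_nat.
rewrite (eq_cons _ _ (mem_ascending perm_s gt1_n)).
rewrite (eq_cons _ _ (mem_descending perm_s gt1_n)).
rewrite -consecutive_sides ?ext_code1 ?ext_code2 //.
by case: (2 \in l1); rewrite // orbC.
Qed.

Lemma exists_pyramidal n (P : nat -> bool) : 2 < n -> P 1 = false -> P 2 = true ->
  exists2 s, pyramidal n s & forall w, 0 < w < n -> ext_code n s w = P w.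
Proof.
move=> gt2_n P1 P2; set I := iota 2 (n - 2).
set l1 := filter P I; set l2 := rev (filter (predC P) I).
have iota_n : iota 1 n = 1 :: rcons I n.
  have def_n : n = (n - 2).+1 + 1 by lia_nat.
  have e : 1 + (n - 2).+1 = n by lia_nat.
  by rewrite {1}def_n iotaD e cats1.
have perm_s : perm_eq (1 :: l1 ++ n :: l2) (iota 1 n).
  rewrite iota_n perm_cons; apply: perm_trans (permEl (perm_catCA l1 [:: n] l2)) _.
  rewrite perm_sym perm_rcons /= perm_cons -(perm_filterC P I).
  by rewrite perm_cat2l perm_sym perm_rev.
have sorted_I : sorted ltn I by exact: iota_ltn_sorted.
exists (1 :: l1 ++ n :: l2).
  split=> //; exists l1, l2; split=> //; split.
    by apply: sorted_filter => //; exact: ltn_trans.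
  by rewrite rev_sorted; apply: sorted_filter => //; exact: ltn_trans.
move=> w rng_w; case: (eqVneq w 1) => [-> // | ne_w1].
have inner_w : 1 < w < n by move: ne_w1; lia_nat.
have in_I v : 1 < v < n -> v \in I by rewrite mem_iota; lia_nat.
have in_I2 : 2 \in I by rewrite mem_iota; lia_nat.
rewrite ext_code_parts //; last lia_nat.
by rewrite /l1 !mem_filter P2 in_I2 in_I //; case: (P w).
Qed.

Lemma mem_Epairs n (e : nat * nat) : (e \in Epairs n) = [&& 0 < e.1, e.1 < e.2 & e.2 <= n].
Proof.
case: e => p q; rewrite /Epairs mem_filter /=.
case: (ltnP p q) => lt_pq /=; last by rewrite !andbF.
apply/allpairsP/idP => [[[u v] /= [u_iota v_iota [-> ->]]] | rng].
  by move: u_iota v_iota; rewrite !mem_iota; lia_nat.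
by exists (p, q); rewrite /= !mem_iota; split=> //; lia_nat.
Qed.

Lemma same_tourP n x y : 2 < n -> pyramidal n x -> pyramidal n y ->
  same_tour n x y <-> forall i, 0 < i < n -> ext_code n x i = ext_code n y i.
Proof.
move=> gt2_n px py; split=> [same_xy | same_code [p q]].
  elim=> [|i IHi] rng_i; first lia_nat.
  case: (eqVneq i 0) => [-> | ne_i0]; first by rewrite !ext_code1.
  case: (eqVneq i 1) => [-> | ne_i1]; first by rewrite !ext_code2.
  have rng_pq : 0 < i < i.+1 by move: ne_i0; lia_nat.
  have lt_n : i.+1 < n by lia_nat.
  have edgeE z : pyramidal n z ->
      ((i, i.+1) \in tour_edges z) = (ext_code n z i.+1 == ext_code n z i).
    move=> pz; rewrite (pyramidal_edgeE gt2_n pz rng_pq) ?(negbTE ne_i1) /=; last lia_nat.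
    by rewrite eq_sym next_same_succ.
  have in_E : (i, i.+1) \in Epairs n by rewrite mem_Epairs /=; lia_nat.
  have := same_xy _ in_E; rewrite !edgeE // IHi; last lia_nat.
  by case: (ext_code n x i.+1); case: (ext_code n y i.+1); case: (ext_code n y i).
rewrite mem_Epairs /= => /and3P[p_gt0 lt_pq le_qn].
have rng_pq : 0 < p < q by rewrite p_gt0.
rewrite (pyramidal_edgeE gt2_n px rng_pq le_qn) (pyramidal_edgeE gt2_n py rng_pq le_qn).
rewrite (@next_same_addb (ext_code n y) _ _ _ false) //; first lia_nat.
by move=> j rng_j; rewrite addbF same_code //; lia_nat.
Qed.

Section Polytope.
Local Open Scope ring_scope.
Variable R : realFieldType.

Lemma ler_ltr_sum (I : eqType) (r : seq I) (F G : I -> R) :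
  (forall i, i \in r -> F i <= G i) -> (exists2 i, i \in r & F i < G i) ->
  \sum_(i <- r) F i < \sum_(i <- r) G i.
Proof.
elim: r => [|a r IHr] le_FG [i]; first by rewrite in_nil.
have le_r j : j \in r -> F j <= G j by move=> j_r; rewrite le_FG // in_cons j_r orbT.
rewrite !big_cons in_cons => /orP[/eqP-> lt_a | i_r lt_i].
  apply: ltr_leD => //; rewrite big_seq [leRHS]big_seq; exact: ler_sum.
by apply: ler_ltD; [rewrite le_FG ?mem_head | apply: IHr => //; exists i].
Qed.

Lemma pyr_adjacent_of_union_closed n (x y : seq nat) :
  (forall z, pyramidal n z ->
     (forall e, e \in Epairs n -> e \in tour_edges z ->
        (e \in tour_edges x) || (e \in tour_edges y)) ->
     same_tour n z x \/ same_tour n z y) ->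
  pyr_adjacent R n x y.
Proof.
move=> closed.
pose c e : R := (charvec R x e + charvec R y e - 1).
exists c; split.
  rewrite /dot; apply: eq_bigr => e _; rewrite /c /charvec.
  by case: (e \in tour_edges x); case: (e \in tour_edges y); rewrite /= ?mulr1 ?mulr0 //; lra.
move=> z pz not_zx not_zy.
have [/hasP[e e_E /andP[e_z e_xy]] | /hasPn sub_xy] := boolP (has
  (fun e => (e \in tour_edges z) && ~~ ((e \in tour_edges x) || (e \in tour_edges y)))
  (Epairs n)).
  apply: ler_ltr_sum => [f _ | ]; last first.
    exists e => //; rewrite /c /charvec e_z; move: e_xy.
    by case: (e \in tour_edges x); case: (e \in tour_edges y) => //= _; lra.
  rewrite /c /charvec.
  by case: (f \in tour_edges x); case: (f \in tour_edges y); case: (f \in tour_edges z) => /=; lra.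
exfalso; have [] // := closed z pz => e e_E e_z.
by have := sub_xy e e_E; rewrite e_z negbK.
Qed.

Lemma not_pyr_adjacent_of_exchange n (x y z w : seq nat) :
  pyramidal n z -> pyramidal n w ->
  ~ same_tour n z x -> ~ same_tour n z y -> ~ same_tour n w x -> ~ same_tour n w y ->
  (forall e, e \in Epairs n ->
     ((e \in tour_edges z) + (e \in tour_edges w) =
      (e \in tour_edges x) + (e \in tour_edges y))%N) ->
  ~ pyr_adjacent R n x y.
Proof.
move=> pz pw zx zy wx wy exchange [c [dot_xy max_xy]].
have dot_sum : dot n c z + dot n c w = dot n c x + dot n c y.
  rewrite /dot -!big_split; apply: eq_big_seq => e e_E /=.
  by rewrite -!mulrDr /charvec -!natrD exchange.
have := ltrD (max_xy z pz zx zy) (max_xy w pw wx wy).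
by rewrite dot_sum -dot_xy ltxx.
Qed.

End Polytope.

Lemma not_same_tour_of_code n x y i : 2 < n -> pyramidal n x -> pyramidal n y ->
  0 < i < n -> ext_code n x i != ext_code n y i -> ~ same_tour n x y.
Proof. by move=> gt2_n px py rng_i ne_i /(same_tourP gt2_n px py)/(_ i rng_i)/eqP; apply/negP. Qed.

Lemma next_same_code n s h p : 0 < p < n ->
  (forall t, 0 < t < n -> ext_code n s t = h t) -> next_same (ext_code n s) n p = next_same h n p.
Proof.
move=> rng_p code_s; apply: (next_same_addb (d := false)); first lia_nat.
by move=> j rng_j; rewrite addbF code_s //; lia_nat.
Qed.

Lemma tour_edges_exchange n x y z w k : 2 < n ->
  pyramidal n x -> pyramidal n y -> pyramidal n z -> pyramidal n w -> k.+1 < n ->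
  ext_code n x k != ext_code n x k.+1 -> ext_code n y k != ext_code n y k.+1 ->
  (forall t, 0 < t < n -> ext_code n z t = splice (ext_code n x) (ext_code n y) k t) ->
  (forall t, 0 < t < n -> ext_code n w t = splice (ext_code n y) (ext_code n x) k t) ->
  forall e, e \in Epairs n ->
    (e \in tour_edges z) + (e \in tour_edges w) = (e \in tour_edges x) + (e \in tour_edges y).
Proof.
move=> gt2_n px py pz pw lt_kn sw_x sw_y code_z code_w [p q].
rewrite mem_Epairs /= => /and3P[p_gt0 lt_pq le_qn].
have rng_pq : 0 < p < q by rewrite p_gt0.
have rng_p : 0 < p < n by lia_nat.
have lt_pn : p < n by lia_nat.
rewrite !(pyramidal_edgeE gt2_n _ rng_pq le_qn) //.
rewrite (next_same_code rng_p code_z) (next_same_code rng_p code_w) !next_same_splice //.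
by case: (_ && _) => //; case: (p < k) => //; rewrite addnC.
Qed.

Lemma not_pyr_adjacent_of_splice (R : realFieldType) n x y : 2 < n ->
  pyramidal n x -> pyramidal n y -> nontrivial_splice n (ext_code n x) (ext_code n y) ->
  ~ pyr_adjacent R n x y.
Proof.
move=> gt2_n px py [k [[k_gt0 lt_kn sw_x sw_y] [[i rng_i ne_i] [j rng_j ne_j]]]].
have gt2_i : 2 < i by apply: (gt2_of_diff _ _ _ ne_i); rewrite ?ext_code1 ?ext_code2 //; lia_nat.
set f := ext_code n x in sw_x ne_i ne_j *; set g := ext_code n y in sw_y ne_i ne_j *.
have [le1k le2k] : 1 <= k /\ 2 <= k by split; lia_nat.
have splice12 a b : a 1 = false -> a 2 = true -> splice a b k 1 = false /\ splice a b k 2 = true.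
  by rewrite /splice le1k le2k.
have [z1 z2] := splice12 f g (ext_code1 n x) (ext_code2 n x).
have [w1 w2] := splice12 g f (ext_code1 n y) (ext_code2 n y).
have [z pz code_z] := exists_pyramidal gt2_n z1 z2.
have [w pw code_w] := exists_pyramidal gt2_n w1 w2.
have rng_i' : 0 < i < n by lia_nat.
have rng_j' : 0 < j < n by lia_nat.
have le_ik : i <= k.+1 by lia_nat.
have le_kj : k <= j by lia_nat.
have ne_kk1 : f k (+) g k = f k.+1 (+) g k.+1.
  by move: sw_x sw_y; case: (f k); case: (f k.+1); case: (g k); case: (g k.+1).
apply: (not_pyr_adjacent_of_exchange pz pw);
  last exact: (tour_edges_exchange gt2_n px py pz pw lt_kn sw_x sw_y code_z code_w).
- apply: (not_same_tour_of_code gt2_n pz px rng_j').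
  rewrite code_z // splice_right // -/f ne_kk1.
  by move: ne_j; case: (f j); case: (g j); case: (f k.+1 (+) g k.+1).
- apply: (not_same_tour_of_code gt2_n pz py rng_i').
  by rewrite code_z // splice_left.
- apply: (not_same_tour_of_code gt2_n pw px rng_i').
  by rewrite code_w // splice_left // -/f eq_sym.
- apply: (not_same_tour_of_code gt2_n pw py rng_j').
  rewrite code_w // splice_right 1?eq_sym // -/g [g k (+) _]addbC ne_kk1.
  by move: ne_j; case: (f j); case: (g j); case: (f k.+1 (+) g k.+1).
Qed.

Lemma pyr_adjacent_of_no_splice (R : realFieldType) n x y : 2 < n ->
  pyramidal n x -> pyramidal n y -> ~ nontrivial_splice n (ext_code n x) (ext_code n y) ->
  pyr_adjacent R n x y.
Proof.
move=> gt2_n px py no_splice; apply: pyr_adjacent_of_union_closed => z pz sub_xy.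
have [zx | not_zx] := classic (same_tour n z x); first by left.
have [zy | not_zy] := classic (same_tour n z y); first by right.
have code_diff v : pyramidal n v -> ~ same_tour n z v ->
    exists2 i, 0 < i < n & ext_code n z i != ext_code n v i.
  move=> pv not_zv; apply: NNPP => no_diff; apply/not_zv/(same_tourP gt2_n pz pv) => i rng_i.
  by case: (ext_code n z i =P ext_code n v i) => // /eqP ne_i; case: no_diff; exists i.
case: no_splice; apply: (nontrivial_splice_of_mixture _
  (ext_code1 n x) (ext_code2 n x) (ext_code1 n y) (ext_code2 n y) (ext_code1 n z) (ext_code2 n z)
  (code_diff x px not_zx) (code_diff y py not_zy)).
move=> i i_gt0 lt_i1n; set q := next_same (ext_code n z) n i.
have rng_iq : 0 < i < q by rewrite i_gt0 next_same_gt.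
have le_qn : q <= n by apply: next_same_le; lia_nat.
have not12 : (i == 1) && (q == 2) = false.
  apply/negbTE/andP => [[/eqP i1 /eqP q2]]; move: q2; rewrite /q i1.
  by move/eqP; rewrite next_same_succ ?ext_code1 ?ext_code2 //; lia_nat.
have edgeE v : pyramidal n v -> ((i, q) \in tour_edges v) = (q == next_same (ext_code n v) n i).
  by move=> pv; rewrite (pyramidal_edgeE gt2_n pv rng_iq le_qn) not12.
have /sub_xy : (i, q) \in Epairs n by rewrite mem_Epairs /= i_gt0 next_same_gt.
by rewrite !edgeE // eqxx => /(_ isT) /orP[] /eqP; [left | right].
Qed.

Definition nonadjacency_condition (n : nat) (x y : seq nat) : Prop :=
  (exists k, [/\ 3 < k, k < n - 2,
                 code n x k = code n y k,
                 code n x k.+1 = code n y k.+1 &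
                 code n x k != code n x k.+1] /\
             (exists i, [/\ 3 <= i, i < k & code n x i != code n y i]) /\
             (exists j, [/\ k.+1 < j, j <= n - 1 & code n x j != code n y j]))
  \/
  (exists k, [/\ 3 <= k, k < n - 2,
                 code n x k = code n y k.+1,
                 code n x k.+1 = code n y k &
                 code n x k != code n x k.+1] /\
             (exists j, [/\ k.+1 < j, j <= n - 1 & code n x j = code n y j])).

Lemma nonadjacency_condition_of_splice n x y :
  nontrivial_splice n (ext_code n x) (ext_code n y) -> nonadjacency_condition n x y.
Proof.
move=> [k [[k_gt0 lt_kn sw_x sw_y] [[i rng_i ne_i] [j rng_j ne_j]]]].
have gt2_i : 2 < i by apply: (gt2_of_diff _ _ _ ne_i); rewrite ?ext_code1 ?ext_code2 //; lia_nat.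
have gt_jk1 : k.+1 < j.
  rewrite ltn_neqAle; apply/andP; split; last lia_nat.
  by apply/eqP => jk; rewrite -jk eqxx in ne_j.
have [eq_k | ne_k] := eqVneq (ext_code n x k) (ext_code n y k).
- have lt_ik : i < k.
    rewrite ltn_neqAle; apply/andP; split; last lia_nat.
    by apply/eqP => ik; rewrite ik eq_k eqxx in ne_i.
  have eq_k1 : ext_code n x k.+1 = ext_code n y k.+1.
    by move: sw_x sw_y eq_k; do 4!case: (ext_code _ _ _).
  left; exists k; split; first by split; rewrite -?ext_codeE //; lia_nat.
  split; first by exists i; split; rewrite -?ext_codeE //; lia_nat.
  exists j; split; rewrite -?ext_codeE //; try lia_nat.
  by move: ne_j; rewrite eq_k1; do 3!case: (ext_code _ _ _).
- have [e1 e2] : ext_code n x k = ext_code n y k.+1 /\ ext_code n x k.+1 = ext_code n y k.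
    by move: sw_x sw_y ne_k; do 4!case: (ext_code _ _ _).
  right; exists k; split; first by split; rewrite -?ext_codeE //; lia_nat.
  exists j; split; rewrite -?ext_codeE //; try lia_nat.
  by move: ne_j sw_y; rewrite e2; do 4!case: (ext_code _ _ _).
Qed.

Lemma splice_of_nonadjacency_condition n x y :
  nonadjacency_condition n x y -> nontrivial_splice n (ext_code n x) (ext_code n y).
Proof.
case=> [[k [[gt3_k lt_kn e_k e_k1 sw] [[i [ge3_i lt_ik ne_i]] [j [lt_k1j le_jn ne_j]]]]]
      | [k [[ge3_k lt_kn e_k e_k1 sw] [j [lt_k1j le_jn eq_j]]]]];
  exists k; rewrite -!ext_codeE in e_k e_k1 sw; try lia_nat.
- split; first by split; rewrite -?e_k -?e_k1 //; lia_nat.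
  split; first by exists i; rewrite ?ext_codeE //; lia_nat.
  exists j; first lia_nat.
  have ne_j' : ext_code n x j != ext_code n y j by rewrite !ext_codeE //; lia_nat.
  by rewrite e_k1 addbb; move: ne_j'; do 2!case: (ext_code _ _ _).
- have sw_y : ext_code n y k != ext_code n y k.+1 by rewrite -e_k -e_k1 eq_sym.
  split; first by split=> //; lia_nat.
  split; first by exists k; rewrite -?e_k1 //; lia_nat.
  exists j; first lia_nat.
  have eq_j' : ext_code n x j = ext_code n y j by rewrite !ext_codeE //; lia_nat.
  by rewrite eq_j' addbb e_k1; move: sw_y; do 2!case: (ext_code _ _ _).
Qed.

Theorem theorem3 (R : realFieldType) (n : nat) (x y : seq nat) :
  4 <= n ->
  pyramidal n x -> pyramidal n y -> ~ same_tour n x y ->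
  (~ pyr_adjacent R n x y <->
   ((exists k, [/\ 3 < k, k < n - 2,
                  code n x k = code n y k,
                  code n x k.+1 = code n y k.+1 &
                  code n x k != code n x k.+1] /\
              (exists i, [/\ 3 <= i, i < k & code n x i != code n y i]) /\
              (exists j, [/\ k.+1 < j, j <= n - 1 & code n x j != code n y j]))
    \/
    (exists k, [/\ 3 <= k, k < n - 2,
                  code n x k = code n y k.+1,
                  code n x k.+1 = code n y k &
                  code n x k != code n x k.+1] /\
              (exists j, [/\ k.+1 < j, j <= n - 1 & code n x j = code n y j])))).
Proof.
(* The equivalence holds for equal tours as well: both sides are then false. *)
move=> ge4_n px py _.
have gt2_n : 2 < n by lia.
split=> [not_adj | /splice_of_nonadjacency_condition]; last exact: not_pyr_adjacent_of_splice.
apply: nonadjacency_condition_of_splice; apply: NNPP => no_splice.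
exact/not_adj/pyr_adjacent_of_no_splice.
Qed.
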